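(* The rewrite system on LJB-contexts consisting of the three cleaning rules $[I,\Gamma]_V \longrightarrow I,[\Gamma]_V$ (if $FV(I)\cap V=\emptyset$), $[\ ]_V \longrightarrow \emptyset$, and $I\,I \longrightarrow I$ (where $I$ is an item and $\Gamma$ an LJB-context, the rules being applicable anywhere inside a context) is terminating: there is no infinite sequence of rewriting steps.
   Context: Formulas of minimal predicate logic are given by terms $t ::= x \mid f(t_1,\dots,t_n)$ and formulas $A ::= P(t_1,\dots,t_n)\mid A\rightarrow A \mid \forall x\,A$. LJB-contexts and items are defined by mutual induction: an LJB-context is a finite multiset $\{I_1,\dots,I_n\}$ of items; an item is either a formula or an expression $[\Gamma]_V$ where $V$ is a finite set of variables and $\Gamma$ an LJB-context (the variables of $V$ are bound by the bracket). Free variables: $FV(\{I_1,\dots,I_n\})=FV(I_1)\cup\dots\cup FV(I_n)$, $FV(A)$ is the usual set of free variables of a formula, $FV([\Gamma]_V)=FV(\Gamma)\setminus V$. Contexts are multisets, so rewriting is modulo associativity and commutativity of context formation; ''$[\ ]_V\longrightarrow\emptyset$'' means an item $[\Gamma]_V$ with $\Gamma$ empty may be deleted, and ''$I\,I\longrightarrow I$'' means two identical items in the same context may be replaced by one. *)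

From Stdlib Require Import List.
Import ListNotations.

Inductive term : Type :=
| Var : nat -> term
| Fn : nat -> list term -> term.

Inductive formula : Type :=
| Atom : nat -> list term -> formula
| Imp : formula -> formula -> formula
| All : nat -> formula -> formula.

(* items: a formula, or a bracket [Gamma]_V; a context is a finite multiset
   of items, represented as a list taken up to the equivalence [ceq] below
   (permutation, recursively, with V taken as a finite set). *)
Inductive item : Type :=
| IForm : formula -> item
| IBox : list nat -> list item -> item.

Definition context := list item.

Fixpoint tfv (x : nat) (t : term) : Prop :=
  match t with
  | Var y => x = y
  | Fn _ ts => (fix go (l : list term) : Prop :=
                  match l with [] => False | u :: l' => tfv x u \/ go l' end) ts
  end.

Definition tsfv (x : nat) (ts : list term) : Prop := exists t, In t ts /\ tfv x t.

Fixpoint ffv (x : nat) (A : formula) : Prop :=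
  match A with
  | Atom _ ts => tsfv x ts
  | Imp A B => ffv x A \/ ffv x B
  | All y A => ffv x A /\ x <> y
  end.

Fixpoint ifv (x : nat) (I : item) : Prop :=
  match I with
  | IForm A => ffv x A
  | IBox V G => (fix go (l : list item) : Prop :=
                   match l with [] => False | J :: l' => ifv x J \/ go l' end) G
                /\ ~ In x V
  end.

Inductive ieq : item -> item -> Prop :=
| ieq_form : forall A, ieq (IForm A) (IForm A)
| ieq_box : forall V W G H,
    (forall x, In x V <-> In x W) -> ceq G H -> ieq (IBox V G) (IBox W H)
with ceq : context -> context -> Prop :=
| ceq_nil : ceq [] []
| ceq_cons : forall I J G H, ieq I J -> ceq G H -> ceq (I :: G) (J :: H)
| ceq_swap : forall I J G, ceq (I :: J :: G) (J :: I :: G)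
| ceq_trans : forall G H K, ceq G H -> ceq H K -> ceq G K.

Inductive cstep : context -> context -> Prop :=
| step_extract : forall V I Gam G,
    (forall x, In x V -> ~ ifv x I) ->
    cstep (IBox V (I :: Gam) :: G) (I :: IBox V Gam :: G)
| step_empty : forall V G, cstep (IBox V [] :: G) G
| step_dup : forall I G, cstep (I :: I :: G) (I :: G)
| step_inside : forall V Gam Gam' G,
    cstep Gam Gam' -> cstep (IBox V Gam :: G) (IBox V Gam' :: G)
| step_tail : forall I G G', cstep G G' -> cstep (I :: G) (I :: G')
| step_mod : forall G G1 G2 G', ceq G G1 -> cstep G1 G2 -> ceq G2 G' -> cstep G G'.

(* Give a formula weight 1 and a bracket [Γ]_V weight 1 + 2 w(Γ), where the
   weight of a context is the sum of the weights of its items.  Extracting I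
   from [I, Γ]_V replaces 2 w(I) by w(I), deleting an empty bracket removes
   weight 1, and merging duplicates removes an item of weight at least 1; since
   the weight of a bracket grows with its contents, every step anywhere inside
   a context strictly decreases its weight, which is moreover invariant under
   reordering. *)

From Stdlib Require Import List Lia.
Import ListNotations.

Lemma no_infinite_chain_of_decreasing_measure {A : Type} (R : A -> A -> Prop)
    (m : A -> nat) :
  (forall x y, R x y -> m y < m x) ->
  ~ exists f : nat -> A, forall n, R (f n) (f (S n)).
Proof.
  intros Hdec [f Hf].
  assert (Hdrop : forall n, m (f n) + n <= m (f 0)).
  { induction n as [|n IH]; [lia|].
    specialize (Hdec _ _ (Hf n)); lia. }
  specialize (Hdrop (S (m (f 0)))); lia.
Qed.

Fixpoint item_weight (I : item) : nat :=
  match I with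
  | IForm _ => 1
  | IBox _ G => 1 + 2 * list_sum (map item_weight G)
  end.

Definition context_weight (G : context) : nat := list_sum (map item_weight G).

Lemma context_weight_cons I G :
  context_weight (I :: G) = item_weight I + context_weight G.
Proof. reflexivity. Qed.

Lemma item_weight_box V G : item_weight (IBox V G) = 1 + 2 * context_weight G.
Proof. reflexivity. Qed.

Lemma item_weight_pos I : 1 <= item_weight I.
Proof. destruct I; simpl; lia. Qed.

Scheme ieq_mut_ind := Induction for ieq Sort Prop
with ceq_mut_ind := Induction for ceq Sort Prop.

Lemma ceq_context_weight G H : ceq G H -> context_weight G = context_weight H.
Proof.
  revert G H.
  apply (ceq_mut_ind (fun I J _ => item_weight I = item_weight J)
                     (fun G H _ => context_weight G = context_weight H));
    intros; rewrite ?context_weight_cons, ?item_weight_box; lia.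
Qed.

Lemma cstep_context_weight_lt G H : cstep G H -> context_weight H < context_weight G.
Proof.
  induction 1 as [V I Gam G _ | V G | I G | V Gam Gam' G _ IH | I G G' _ IH
                 | G G1 G2 G' E1 _ IH E2];
    repeat rewrite ?context_weight_cons, ?item_weight_box in *.
  - pose proof (item_weight_pos I); lia.
  - lia.
  - pose proof (item_weight_pos I); lia.
  - lia.
  - lia.
  - apply ceq_context_weight in E1, E2; lia.
Qed.

Theorem proposition2 :
  ~ exists f : nat -> context, forall n : nat, cstep (f n) (f (S n)).
Proof.
  exact (no_infinite_chain_of_decreasing_measure cstep context_weight
           cstep_context_weight_lt).
Qed.
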